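(* Let $\mu>0$ and let $g:[0,1]\to\mathbb{R}$ be a function such that $t\mapsto t^{\mu}g(t)$ is integrable on $[0,1]$. For integers $n\ge 0$ define the function $$\varphi_{n}(y)=\int_{0}^{1} t^{\mu}\,U_{n-1}\bigl(y-(1+y)t\bigr)\,g(t)\,\mathrm{d}t ,$$ where $U_k$ denotes the Chebyshev polynomial of the second kind of degree $k$ and $U_{-1}\equiv 0$ (so each $\varphi_n$ is a polynomial in $y$ of degree at most $n-1$). Then for every $n\ge 2$, $$\left((1+y)\frac{\mathrm{d}}{\mathrm{d} y} - n\right)\varphi_{n+1}(y) = \left((1+y)\frac{\mathrm{d}}{\mathrm{d} y} + n\right)\varphi_{n-1}(y) + 2n\,\varphi_n(y).$$
   Context: In the paper, $g=g_j$ is any one of the functions $g_1,\dots,g_r$ appearing in a separable approximation $G(y,t)\approx\sum_{j=1}^r\sigma_j f_j(y)g_j(t)$, and the statement is asserted for all $j$; the statement above is for an arbitrary such function $g$. $U_n$ is the Chebyshev polynomial of the second kind, with the convention $U_{-1}=0$. *)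

From HB Require Import structures.
From mathcomp Require Import all_boot all_order all_algebra.
From mathcomp Require Import all_classical all_reals all_analysis.
Set Implicit Arguments. Unset Strict Implicit. Unset Printing Implicit Defensive.
Import Order.TTheory GRing.Theory Num.Theory.
Import numFieldNormedType.Exports.
Local Open Scope classical_set_scope.
Local Open Scope ring_scope.

Fixpoint chebU {R : ringType} (k : nat) (x : R) : R :=
  match k with
  | 0 => 1
  | 1 => 2 * x
  | (k'.+1 as k1).+1 => 2 * x * chebU k1 x - chebU k' x
  end.

Definition chebU_pred {R : ringType} (n : nat) (x : R) : R :=
  match n with 0 => 0 | m.+1 => chebU m x end.

Definition phi {R : realType} (mu : R) (g : R -> R) (n : nat) (y : R) : R :=
  \int[lebesgue_measure]_(t in `[0, 1]%classic)
     (t `^ mu * chebU_pred n (y - (1 + y) * t) * g t).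

(** Write U_{m-1}(x) = W_m(x + 1).  Since y - (1 + y) t + 1 = (1 + y) (1 - t),
    expanding W_m in monomials gives
      phi_m(y) = sum_i w_{m,i} M_i (1 + y)^i,  M_i = int_0^1 (1 - t)^i t^mu g(t) dt,
    i.e. phi_m is W_m with its i-th coefficient multiplied by the moment M_i,
    evaluated at 1 + y.  The Euler operator (1 + y) d/dy multiplies (1 + y)^i
    by i, so it commutes with this rescaling of coefficients, and the claim
    reduces to the polynomial identity
      z W'_{n+1} - n W_{n+1} = z W'_{n-1} + n W_{n-1} + 2n W_n.
    This follows from the recurrence W_{n+1} + W_{n-1} = 2 (z - 1) W_n and from
    W'_{n+1} - W'_{n-1} = 2n W_n, which is proved by induction from the
    recurrence. *)

From HB Require Import structures.
From mathcomp Require Import all_boot all_order all_algebra.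
From mathcomp Require Import all_classical all_reals all_analysis.
From mathcomp Require Import measurable_realfun ring lra.
Set Implicit Arguments. Unset Strict Implicit. Unset Printing Implicit Defensive.
Import Order.TTheory GRing.Theory Num.Theory.
Import numFieldNormedType.Exports.
Local Open Scope classical_set_scope.
Local Open Scope ring_scope.

Lemma chebU_predSS (R : nzRingType) k (x : R) :
  chebU_pred k.+2 x = 2 * x * chebU_pred k.+1 x - chebU_pred k x.
Proof. by case: k => [|k] //=; rewrite mulr1 subr0. Qed.

Section ShiftedChebyshev.
Variable R : comNzRingType.

Fixpoint chebU_shift (m : nat) : {poly R} :=
  match m with
  | 0 => 0
  | 1 => 1
  | (k.+1 as k1).+1 => ('X - 1) * chebU_shift k1 *+ 2 - chebU_shift k
  end.

Lemma chebU_shiftSS k :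
  chebU_shift k.+2 = ('X - 1) * chebU_shift k.+1 *+ 2 - chebU_shift k.
Proof. by []. Qed.

Lemma horner_chebU_shift m x : (chebU_shift m).[x + 1] = chebU_pred m x.
Proof.
elim/ltn_ind: m => -[|[|k]] IH; [by rewrite hornerE | by rewrite hornerE |].
rewrite chebU_shiftSS chebU_predSS -!IH // !hornerE addrK; ring.
Qed.

Lemma deriv_chebU_shiftSS k :
  (chebU_shift k.+2)^`() =
  (chebU_shift k.+1 + ('X - 1) * (chebU_shift k.+1)^`()) *+ 2
  - (chebU_shift k)^`().
Proof. by rewrite chebU_shiftSS derivB derivMn derivM derivXsubC mul1r. Qed.

Lemma deriv_chebU_shift_diff k :
  (chebU_shift k.+2)^`() - (chebU_shift k)^`() = chebU_shift k.+1 *+ (2 * k.+1).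
Proof.
elim/ltn_ind: k => -[|[|k]] IH.
- by rewrite deriv_chebU_shiftSS /= derivC deriv0; ring.
- rewrite deriv_chebU_shiftSS (deriv_chebU_shiftSS 0) (chebU_shiftSS 0) /=.
  by rewrite derivC deriv0; ring.
(* The differences themselves satisfy the recurrence, with a source term. *)
have -> : (chebU_shift k.+4)^`() - (chebU_shift k.+2)^`() =
    (chebU_shift k.+3 - chebU_shift k.+1) *+ 2
    + ('X - 1) * ((chebU_shift k.+3)^`() - (chebU_shift k.+1)^`()) *+ 2
    - ((chebU_shift k.+2)^`() - (chebU_shift k)^`()).
  rewrite (deriv_chebU_shiftSS k.+2) (deriv_chebU_shiftSS k); ring.
rewrite IH // IH // (chebU_shiftSS k.+1); ring.
Qed.

Lemma chebU_shift_euler (n : nat) : (0 < n)%N ->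
  'X * (chebU_shift n.+1)^`() - chebU_shift n.+1 *+ n =
  'X * (chebU_shift n.-1)^`() + chebU_shift n.-1 *+ n + chebU_shift n *+ (2 * n).
Proof.
case: n => [//|k] _; rewrite succnK.
have -> : 'X * (chebU_shift k.+2)^`() =
    'X * (chebU_shift k)^`() + 'X * ((chebU_shift k.+2)^`() - (chebU_shift k)^`()).
  ring.
rewrite deriv_chebU_shift_diff (chebU_shiftSS k); ring.
Qed.

End ShiftedChebyshev.

Arguments chebU_shift {R}.

Section Hadamard.
Variables (R : nzRingType) (M : nat -> R).

Definition hadamard (p : {poly R}) : {poly R} := \poly_(i < size p) (p`_i * M i).

Lemma coef_hadamard p i : (hadamard p)`_i = p`_i * M i.
Proof.
rewrite coef_poly; case: ltnP => // /(nth_default 0) ->.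
by rewrite mul0r.
Qed.

Lemma hadamard_is_zmod_morphism : zmod_morphism hadamard.
Proof.
by move=> p q; apply/polyP => i; rewrite coefB !coef_hadamard coefB mulrBl.
Qed.

HB.instance Definition _ :=
  GRing.isZmodMorphism.Build {poly R} {poly R} hadamard hadamard_is_zmod_morphism.

Lemma hadamard_euler p : hadamard ('X * p^`()) = 'X * (hadamard p)^`().
Proof.
apply/polyP => -[|i]; rewrite coef_hadamard !coefXM ?mul0r //.
by rewrite !coef_deriv coef_hadamard mulrnAl.
Qed.

End Hadamard.

Lemma Rintegral_sum d (T : measurableType d) (R : realType)
    (mu : {measure set T -> \bar R}) (D : set T) (I : Type) (s : seq I)
    (F : I -> T -> R) :
  measurable D -> (forall i, mu.-integrable D (EFin \o F i)) ->
  \int[mu]_(x in D) (\sum_(i <- s) F i x) = \sum_(i <- s) \int[mu]_(x in D) F i x.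
Proof.
move=> mD intF; elim: s => [|i s IH].
  under eq_Rintegral do rewrite big_nil.
  by rewrite big_nil Rintegral_cst // mul0r.
have int_sum : mu.-integrable D (EFin \o fun x => \sum_(j <- s) F j x).
  apply: (eq_integrable mD _ _ _ (integrable_sum mD s (fun j _ => intF j))).
  by move=> x _; rewrite /= sumEFin.
under eq_Rintegral do rewrite big_cons.
by rewrite RintegralD // IH big_cons.
Qed.

Section Moments.
Variables (R : realType) (f : R -> R).
Let I01 : set R := `[0, 1].
Let mI01 : measurable I01. Proof. exact: measurable_itv. Qed.
Hypothesis f_int : lebesgue_measure.-integrable I01 (EFin \o f).

Lemma integrable_onemXnM i :
  lebesgue_measure.-integrable I01 (EFin \o fun t => (1 - t) ^+ i * f t).
Proof.
apply: (eq_integrable (mu := lebesgue_measure) mI01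
  (fun t => ((1 - t) ^+ i)%:E * (f t)%:E)%E).
  by move=> t _; rewrite /= EFinM.
apply: integrableMr => //; first exact/measurable_funX/measurable_funB.
exists 1; split; first exact: num_real.
move=> r r_gt1 t; rewrite /I01 /= in_itv /= => /andP[t_ge0 t_le1].
apply: le_trans (ltW r_gt1); rewrite normrX exprn_ile1 //.
by rewrite ger0_norm; lra.
Qed.

Definition moment i := \int[lebesgue_measure]_(t in I01) ((1 - t) ^+ i * f t).

Lemma Rintegral_horner_onem (p : {poly R}) c :
  \int[lebesgue_measure]_(t in I01) (p.[c * (1 - t)] * f t) =
  (hadamard moment p).[c].
Proof.
have int_term i : lebesgue_measure.-integrable I01
    (EFin \o fun t => p`_i * c ^+ i * ((1 - t) ^+ i * f t)).
  apply: (eq_integrable (mu := lebesgue_measure) mI01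
    (fun t => (p`_i * c ^+ i)%:E * ((1 - t) ^+ i * f t)%:E)%E).
    by move=> t _; rewrite /= EFinM.
  exact: integrableZl (integrable_onemXnM i).
transitivity (\int[lebesgue_measure]_(t in I01)
    \sum_(i < size p) p`_i * c ^+ i * ((1 - t) ^+ i * f t)).
  apply: eq_Rintegral => t _; rewrite horner_coef mulr_suml.
  by apply: eq_bigr => i _; rewrite exprMn; ring.
rewrite Rintegral_sum // (horner_coef_wide _ (size_poly _ _)).
apply: eq_bigr => i _.
by rewrite RintegralZl // ?integrable_onemXnM // coef_hadamard mulrAC.
Qed.

End Moments.

Lemma phi_hadamard (R : realType) (mu : R) (g : R -> R) m :
  lebesgue_measure.-integrable `[0, 1]%classic (fun t : R => (t `^ mu * g t)%:E) ->
  phi mu g m =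
  fun y => (hadamard (moment (fun t => t `^ mu * g t)) (chebU_shift m)).[1 + y].
Proof.
move=> int_g; apply/funext => y; rewrite -Rintegral_horner_onem //.
apply: eq_Rintegral => t _; rewrite -horner_chebU_shift.
by rewrite (_ : _ + 1 = (1 + y) * (1 - t)); ring.
Qed.

Lemma euler_horner_addl (R : realType) (p : {poly R}) (a y : R) :
  (a + y) * derive1 (fun x => p.[a + x]) y = ('X * p^`()).[a + y].
Proof.
have -> : (fun x => p.[a + x]) = horner (p \Po (a%:P + 'X)).
  by apply/funext => x; rewrite horner_comp !hornerE.
rewrite -derivE deriv_comp derivD derivC derivX add0r mulr1.
by rewrite horner_comp !hornerE.
Qed.

Theorem theorem2p2 (R : realType) (mu : R) (g : R -> R) (hmu : 0 < mu)
  (hint : lebesgue_measure.-integrable `[0, 1]%classic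
            (fun t : R => (t `^ mu * g t)%:E))
  (n : nat) (hn : (2 <= n)%N) (y : R) :
  (1 + y) * derive1 (phi mu g n.+1) y - n%:R * phi mu g n.+1 y =
  (1 + y) * derive1 (phi mu g n.-1) y + n%:R * phi mu g n.-1 y
  + 2 * n%:R * phi mu g n y.
Proof.
rewrite !(phi_hadamard _ hint) !euler_horner_addl -!hadamard_euler.
rewrite -natrM !mulr_natl -!hornerMn -!(hornerD, hornerN).
by rewrite -!(raddfMn, raddfD, raddfN) chebU_shift_euler // ltnW.
Qed.
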